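(* Let $0\le\alpha\le\beta$ be fixed. Let $(q_n)_{n\ge1}$ and $(p_n)_{n\ge1}$ be sequences with $q_n\in(0,1)$ and $p_n\in(q_n,1]$ for all $n$, such that $\lim_{n\to\infty}p_n=1$, $\lim_{n\to\infty}q_n=1$, $\lim_{n\to\infty}p_n^n=1$ and $\lim_{n\to\infty}q_n^n=1$. Then for every $f\in C[0,1]$, $S_{n,p_n,q_n}(f;x)$ converges to $f(x)$ uniformly on $[0,1]$ as $n\to\infty$, i.e. $\lim_{n\to\infty}\sup_{x\in[0,1]}|S_{n,p_n,q_n}(f;x)-f(x)|=0$.
   Context: For $p>0$, $q>0$ and integers $m\ge 0$, the $(p,q)$-integer is $[m]_{p,q}=p^{m-1}+p^{m-2}q+\cdots+pq^{m-2}+q^{m-1}$ (so $[m]_{p,q}=\frac{p^m-q^m}{p-q}$ when $p\ne q$, and $[0]_{p,q}=0$). The $(p,q)$-factorial is $[m]_{p,q}!=[1]_{p,q}[2]_{p,q}\cdots[m]_{p,q}$ with $[0]_{p,q}!=1$, and the $(p,q)$-binomial coefficient is $\left[\begin{smallmatrix} n\\ k\end{smallmatrix}\right]_{p,q}=\frac{[n]_{p,q}!}{[k]_{p,q}!\,[n-k]_{p,q}!}$ for $0\le k\le n$. For $f\in C[0,1]$, real parameters $0\le\alpha\le\beta$, and $x\in[0,1]$, the $(p,q)$-Bernstein–Stancu operator is $$S_{n,p,q}(f;x)=\frac{1}{p^{n(n-1)/2}}\sum_{k=0}^{n}\left[\begin{smallmatrix} n\\ k\end{smallmatrix}\right]_{p,q}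 p^{k(k-1)/2}\,x^{k}\prod_{s=0}^{n-k-1}(p^{s}-q^{s}x)\; f\!\left(\frac{p^{n-k}[k]_{p,q}+\alpha}{[n]_{p,q}+\beta}\right),$$ where an empty product (when $k=n$) equals $1$. *)

From Stdlib Require Import Reals Lra Lia.
Open Scope R_scope.

(* (p,q)-integer [m]_{p,q} = sum_{j=0}^{m-1} p^(m-1-j) q^j ; [0] = 0 *)
Fixpoint pq_int_aux (p q : R) (m j : nat) : R :=
  match j with
  | O => 0
  | S j' => pq_int_aux p q m j' + p ^ (m - 1 - j') * q ^ j'
  end.
Definition pq_int (p q : R) (m : nat) : R := pq_int_aux p q m m.

Fixpoint pq_fact (p q : R) (m : nat) : R :=
  match m with
  | O => 1
  | S m' => pq_fact p q m' * pq_int p q (S m')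
  end.

Definition pq_binom (p q : R) (n k : nat) : R :=
  pq_fact p q n / (pq_fact p q k * pq_fact p q (n - k)).

Fixpoint pq_prod (p q x : R) (m : nat) : R :=
  match m with
  | O => 1
  | S m' => pq_prod p q x m' * (p ^ m' - q ^ m' * x)
  end.


Definition pq_stancu (alpha beta p q : R) (n : nat) (f : R -> R) (x : R) : R :=
  / p ^ (n * (n - 1) / 2) *
  sum_f_R0 (fun k =>
     pq_binom p q n k * p ^ (k * (k - 1) / 2) * x ^ k * pq_prod p q x (n - k)
     * f ((p ^ (n - k) * pq_int p q k + alpha) / (pq_int p q n + beta))) n.

Definition continuous_on_01 (f : R -> R) : Prop :=
  forall x, 0 <= x <= 1 -> limit1_in f (fun y => 0 <= y <= 1) (f x) x.

From Stdlib Require Import Reals Lra Lia.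
Open Scope R_scope.

(* The weights of S_{n,p,q} are nonnegative and sum to p^(n(n-1)/2); their first
   two moments against the nodes p^(n-k) [k] are computed exactly from the
   (p,q)-Pascal rule, and give the variance p^(n-1) x (1 - x) / [n] of the
   normalized nodes.  The Stancu shift (alpha, beta) adds at most (beta / [n])^2.
   Bounding a continuous f by |f y - f z| <= eps + K (y - z)^2 then gives
   |S_n f x - f x| <= eps + O(1 / [n]), and [n]_{p,q} >= n q^n with q_n^n -> 1:
   only p_n <= 1 and q_n^n -> 1 are needed. *)

Lemma binom2_succ (j : nat) : (S j * (S j - 1) / 2 = j * (j - 1) / 2 + j)%nat.
Proof.
  replace (S j * (S j - 1))%nat with (j * (j - 1) + j * 2)%nat by (destruct j; simpl; nia).
  rewrite Nat.div_add; lia.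
Qed.

Lemma pq_int_0 (p q : R) : pq_int p q 0 = 0.
Proof. reflexivity. Qed.

Lemma pq_int_aux_mul_sub (p q : R) (m j : nat) : (j <= m)%nat ->
  pq_int_aux p q m j * (p - q) = p ^ m - p ^ (m - j) * q ^ j.
Proof.
  induction j as [|j IH]; intros Hj; simpl pq_int_aux.
  - rewrite Nat.sub_0_r. ring.
  - rewrite Rmult_plus_distr_r, IH by lia.
    replace (m - j)%nat with (S (m - 1 - j)) by lia.
    replace (m - S j)%nat with (m - 1 - j)%nat by lia.
    simpl. ring.
Qed.

Lemma pq_int_mul_sub (p q : R) (m : nat) : pq_int p q m * (p - q) = p ^ m - q ^ m.
Proof. unfold pq_int. rewrite pq_int_aux_mul_sub, Nat.sub_diag by lia. simpl. ring. Qed.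

Lemma pq_int_add (p q : R) (k a : nat) : p <> q ->
  pq_int p q (k + a) = p ^ k * pq_int p q a + q ^ a * pq_int p q k.
Proof.
  intros Hpq. apply (Rmult_eq_reg_r (p - q)); [| lra].
  rewrite Rmult_plus_distr_r, !Rmult_assoc, !pq_int_mul_sub, !pow_add. ring.
Qed.

Lemma pq_int_succ (p q : R) (m : nat) : p <> q ->
  pq_int p q (S m) = p ^ m + q * pq_int p q m.
Proof.
  intros Hpq. replace (S m) with (m + 1)%nat by lia. rewrite pq_int_add by auto.
  replace (pq_int p q 1) with 1 by (unfold pq_int; simpl; ring). ring.
Qed.

Lemma pq_int_ge_mul_pow (p q : R) (m : nat) : 0 <= q <= p -> q <= 1 -> p <> q ->
  INR m * q ^ m <= pq_int p q m.
Proof.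
  intros Hqp Hq1 Hpq. induction m as [|m IH].
  - rewrite pq_int_0. simpl. lra.
  - rewrite pq_int_succ, S_INR by auto. simpl pow.
    assert (q ^ m <= p ^ m) by (apply pow_incr; lra).
    assert (0 <= q ^ m) by (apply pow_le; lra).
    pose proof (pos_INR m). nra.
Qed.

Definition pq_weight (p q x : R) (n k : nat) : R :=
  pq_binom p q n k * p ^ (k * (k - 1) / 2) * x ^ k * pq_prod p q x (n - k).

Definition pq_node (p q : R) (n k : nat) : R := p ^ (n - k) * pq_int p q k.

Section PositiveParameters.

Variables p q : R.
Hypothesis Hqp : 0 < q < p.

Lemma pq_int_pos (m : nat) : 0 < pq_int p q (S m).
Proof.
  assert (q ^ S m < p ^ S m).
  { simpl. assert (q ^ m <= p ^ m) by (apply pow_incr; lra).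
    assert (0 < p ^ m) by (apply pow_lt; lra). nra. }
  pose proof (pq_int_mul_sub p q (S m)). nra.
Qed.

Lemma pq_int_ge0 (m : nat) : 0 <= pq_int p q m.
Proof. destruct m; [rewrite pq_int_0; lra | left; apply pq_int_pos]. Qed.

Lemma pq_fact_pos (m : nat) : 0 < pq_fact p q m.
Proof. induction m; simpl; [lra | apply Rmult_lt_0_compat; auto using pq_int_pos]. Qed.

Lemma pq_binom_succ (m k : nat) : (k <= m)%nat ->
  pq_binom p q (S m) k = pq_binom p q m k * pq_int p q (S m) / pq_int p q (S (m - k)).
Proof.
  intros Hk. unfold pq_binom. replace (S m - k)%nat with (S (m - k)) by lia. simpl pq_fact.
  pose proof (pq_fact_pos m). pose proof (pq_fact_pos k). pose proof (pq_fact_pos (m - k)).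
  pose proof (pq_int_pos (m - k)). pose proof (pq_int_pos m).
  field; repeat split; lra.
Qed.

Lemma pq_binom_succ_succ (m k : nat) :
  pq_binom p q (S m) (S k) = pq_int p q (S m) * pq_binom p q m k / pq_int p q (S k).
Proof.
  unfold pq_binom. simpl (S m - S k)%nat. simpl pq_fact.
  pose proof (pq_fact_pos m). pose proof (pq_fact_pos k). pose proof (pq_fact_pos (m - k)).
  pose proof (pq_int_pos k). pose proof (pq_int_pos m).
  field; repeat split; lra.
Qed.

Lemma pq_node_le (n k : nat) : (k <= n)%nat -> pq_node p q n k <= pq_int p q n.
Proof.
  intros Hk. unfold pq_node.
  assert (E : pq_int p q n = p ^ (n - k) * pq_int p q k + q ^ k * pq_int p q (n - k))
    by (rewrite <- pq_int_add by lra; f_equal; lia).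
  rewrite E. assert (0 <= q ^ k) by (apply pow_le; lra). pose proof (pq_int_ge0 (n - k)). nra.
Qed.

Lemma pq_prod_ge0 (x : R) (m : nat) : 0 <= x <= 1 -> 0 <= pq_prod p q x m.
Proof.
  intros Hx. induction m; simpl; [lra |]. apply Rmult_le_pos; auto.
  assert (q ^ m <= p ^ m) by (apply pow_incr; lra). assert (0 <= q ^ m) by (apply pow_le; lra).
  nra.
Qed.

Lemma pq_weight_ge0 (x : R) (n k : nat) : 0 <= x <= 1 -> 0 <= pq_weight p q x n k.
Proof.
  intros Hx. unfold pq_weight, pq_binom.
  pose proof (pq_fact_pos n). pose proof (pq_fact_pos k). pose proof (pq_fact_pos (n - k)).
  assert (0 <= p ^ (k * (k - 1) / 2)) by (apply pow_le; lra).
  assert (0 <= x ^ k) by (apply pow_le; lra).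
  pose proof (pq_prod_ge0 x (n - k) Hx).
  apply Rmult_le_pos; auto. apply Rmult_le_pos; auto. apply Rmult_le_pos; auto.
  left. apply Rdiv_lt_0_compat; auto. apply Rmult_lt_0_compat; auto.
Qed.

(* The two coefficients on the left are the halves of the splitting
   [[S m] = p^k [S m - k] + q^(S m - k) [k]] (at [k] and [S k]); summing over [k]
   is therefore the induction step for [pq_weight_sum]. *)
Lemma pq_weight_pascal (x : R) (m k : nat) : (k <= m)%nat ->
  p ^ k * pq_int p q (S m - k) / pq_int p q (S m) * pq_weight p q x (S m) k
  + q ^ (S m - S k) * pq_int p q (S k) / pq_int p q (S m) * pq_weight p q x (S m) (S k)
  = pq_weight p q x m k * p ^ m.
Proof.
  intros Hk. unfold pq_weight.
  rewrite pq_binom_succ, pq_binom_succ_succ by auto.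
  replace (S m - k)%nat with (S (m - k)) by lia. simpl (S m - S k)%nat.
  rewrite binom2_succ, pow_add. simpl pq_prod. simpl (x ^ S k).
  replace (p ^ m) with (p ^ k * p ^ (m - k)) by (rewrite <- pow_add; f_equal; lia).
  pose proof (pq_int_pos (m - k)). pose proof (pq_int_pos m). pose proof (pq_int_pos k).
  field. repeat split; lra.
Qed.

Lemma pq_weight_sum (x : R) (n : nat) :
  sum_f_R0 (pq_weight p q x n) n = p ^ (n * (n - 1) / 2).
Proof.
  induction n as [|m IH].
  - simpl. unfold pq_weight, pq_binom. simpl. field.
  - pose proof (pq_int_pos m) as HI.
    set (U := fun k => p ^ k * pq_int p q (S m - k) / pq_int p q (S m) * pq_weight p q x (S m) k).
    set (V := fun k => q ^ (S m - k) * pq_int p q k / pq_int p q (S m) * pq_weight p q x (S m) k).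
    rewrite (sum_eq _ (fun k => U k + V k)).
    2:{ intros k Hk. unfold U, V.
        assert (E : p ^ k * pq_int p q (S m - k) + q ^ (S m - k) * pq_int p q k = pq_int p q (S m))
          by (rewrite <- pq_int_add by lra; f_equal; lia).
        rewrite <- Rmult_plus_distr_r, <- Rdiv_plus_distr, E. field. lra. }
    rewrite plus_sum. simpl (sum_f_R0 U (S m)).
    rewrite (decomp_sum V (S m)) by lia. simpl Init.Nat.pred.
    assert (U (S m) = 0) as ->.
    { unfold U. rewrite Nat.sub_diag, pq_int_0. field. lra. }
    assert (V 0%nat = 0) as ->.
    { unfold V. rewrite pq_int_0. field. lra. }
    rewrite Rplus_0_r, Rplus_0_l, <- plus_sum.
    rewrite (sum_eq _ (fun k => pq_weight p q x m k * p ^ m))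
      by (intros; unfold U, V; apply pq_weight_pascal; auto).
    rewrite <- scal_sum, IH, binom2_succ, pow_add. ring.
Qed.

(* The (p,q)-analogue of [k * C(n, k) = n * C(n - 1, k - 1)]. *)
Lemma pq_weight_node_shift (x : R) (m : nat) (g : nat -> R) :
  sum_f_R0 (fun k => pq_weight p q x (S m) k * pq_node p q (S m) k * g k) (S m)
  = pq_int p q (S m) * x * p ^ m * sum_f_R0 (fun j => pq_weight p q x m j * g (S j)) m.
Proof.
  rewrite decomp_sum by lia. simpl Init.Nat.pred.
  unfold pq_node at 1. rewrite pq_int_0.
  rewrite !Rmult_0_r, !Rmult_0_l, Rplus_0_l, scal_sum.
  apply sum_eq. intros j Hj. unfold pq_weight, pq_node.
  rewrite pq_binom_succ_succ. simpl (S m - S j)%nat.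
  rewrite binom2_succ, pow_add. simpl (x ^ S j).
  replace (p ^ m) with (p ^ j * p ^ (m - j)) by (rewrite <- pow_add; f_equal; lia).
  pose proof (pq_int_pos m). pose proof (pq_int_pos j).
  field. lra.
Qed.

Lemma pq_weight_moment1 (x : R) (n : nat) :
  sum_f_R0 (fun k => pq_weight p q x n k * pq_node p q n k) n
  = pq_int p q n * x * p ^ (n * (n - 1) / 2).
Proof.
  destruct n as [|m].
  - simpl. unfold pq_node. rewrite pq_int_0. ring.
  - rewrite (sum_eq _ (fun k => pq_weight p q x (S m) k * pq_node p q (S m) k * 1))
      by (intros; ring).
    rewrite pq_weight_node_shift.
    rewrite (sum_eq _ (pq_weight p q x m)) by (intros; ring).
    rewrite pq_weight_sum, binom2_succ, pow_add. ring.
Qed.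

Lemma pq_weight_moment2 (x : R) (m : nat) :
  sum_f_R0 (fun k => pq_weight p q x (S m) k * pq_node p q (S m) k ^ 2) (S m)
  = p ^ (S m * (S m - 1) / 2) * pq_int p q (S m) * (p ^ m * x + q * pq_int p q m * x ^ 2).
Proof.
  rewrite (sum_eq _ (fun k => pq_weight p q x (S m) k * pq_node p q (S m) k * pq_node p q (S m) k))
    by (intros; ring).
  rewrite pq_weight_node_shift.
  rewrite (sum_eq _ (fun j => pq_weight p q x m j * p ^ m
                              + pq_weight p q x m j * pq_node p q m j * q)).
  2:{ intros j Hj. unfold pq_node. simpl (S m - S j)%nat. rewrite pq_int_succ by lra.
      replace (p ^ m) with (p ^ j * p ^ (m - j)) at 1 by (rewrite <- pow_add; f_equal; lia).
      ring. }
  rewrite plus_sum, <- !scal_sum, pq_weight_sum, pq_weight_moment1, binom2_succ, pow_add.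
  ring.
Qed.

Lemma pq_weight_variance (x : R) (m : nat) :
  sum_f_R0 (fun k => pq_weight p q x (S m) k * (pq_node p q (S m) k / pq_int p q (S m) - x) ^ 2) (S m)
  = p ^ (S m * (S m - 1) / 2) * (p ^ m * x * (1 - x)) / pq_int p q (S m).
Proof.
  pose proof (pq_int_pos m) as HI.
  set (I := pq_int p q (S m)) in *.
  rewrite (sum_eq _ (fun k => pq_weight p q x (S m) k * pq_node p q (S m) k ^ 2 * / I ^ 2
     + pq_weight p q x (S m) k * pq_node p q (S m) k * (- 2 * x / I)
     + pq_weight p q x (S m) k * x ^ 2)) by (intros; field; lra).
  rewrite !plus_sum, <- !scal_sum, pq_weight_moment2, pq_weight_moment1, pq_weight_sum.
  unfold I in *. rewrite (pq_int_succ p q m) in * by lra. field. lra.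
Qed.

End PositiveParameters.

Lemma weighted_mean_deviation_le (w g h : nat -> R) (c E K : R) (n : nat) :
  0 < sum_f_R0 w n -> (forall k, (k <= n)%nat -> 0 <= w k) ->
  (forall k, (k <= n)%nat -> Rabs (g k - c) <= E + K * h k) ->
  Rabs (sum_f_R0 (fun k => w k * g k) n / sum_f_R0 w n - c)
  <= E + K * (sum_f_R0 (fun k => w k * h k) n / sum_f_R0 w n).
Proof.
  intros HW Hw Hg. set (W := sum_f_R0 w n) in *.
  assert (Hdev : sum_f_R0 (fun k => w k * g k) n / W - c
                 = sum_f_R0 (fun k => w k * (g k - c)) n / W).
  { rewrite (sum_eq (fun k => w k * (g k - c)) (fun k => w k * g k - w k * c))
      by (intros; ring).
    rewrite minus_sum, <- scal_sum. fold W. field. lra. }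
  assert (Hsum : Rabs (sum_f_R0 (fun k => w k * (g k - c)) n)
                 <= sum_f_R0 (fun k => w k * E + w k * h k * K) n).
  { eapply Rle_trans; [apply sum_f_R0_triangle | apply sum_Rle].
    intros k Hk. rewrite Rabs_mult, (Rabs_pos_eq (w k)) by auto.
    replace (w k * E + w k * h k * K) with (w k * (E + K * h k)) by ring.
    apply Rmult_le_compat_l; auto. }
  rewrite plus_sum, <- !scal_sum in Hsum. fold W in Hsum.
  rewrite Hdev. unfold Rdiv. rewrite Rabs_mult, Rabs_inv, (Rabs_pos_eq W) by lra.
  apply (Rmult_le_reg_r W); [lra |].
  replace ((E + K * (sum_f_R0 (fun k => w k * h k) n * / W)) * W)
    with (E * W + K * sum_f_R0 (fun k => w k * h k) n) by (field; lra).
  replace (Rabs (sum_f_R0 (fun k => w k * (g k - c)) n) * / W * W)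
    with (Rabs (sum_f_R0 (fun k => w k * (g k - c)) n)) by (field; lra).
  lra.
Qed.

Lemma stancu_shift_sq_le (P I alpha beta x : R) :
  0 < I -> 0 <= alpha <= beta -> 0 <= x <= 1 ->
  ((P + alpha) / (I + beta) - x) ^ 2 <= 2 * (P / I - x) ^ 2 + 2 * (beta / I) ^ 2.
Proof.
  intros HI Hab Hx.
  set (u := P / I - x). set (r := I / (I + beta)). set (v := (alpha - beta * x) / (I + beta)).
  assert (E : (P + alpha) / (I + beta) - x = r * u + v) by (unfold u, r, v; field; lra).
  assert (Hr : 0 <= r <= 1).
  { unfold r. split; [apply Rmult_le_pos; [lra | left; apply Rinv_0_lt_compat; lra] |].
    apply (Rmult_le_reg_r (I + beta)); [lra |].
    unfold Rdiv. rewrite Rmult_assoc, Rinv_l by lra. lra. }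
  assert (Hv : v ^ 2 <= (beta / I) ^ 2).
  { assert (Hw : Rabs (alpha - beta * x) <= beta) by (apply Rabs_le; nra).
    rewrite <- !Rsqr_pow2. apply Rsqr_le_abs_1.
    unfold v, Rdiv. rewrite !Rabs_mult, (Rabs_pos_eq beta), !Rabs_inv,
      (Rabs_pos_eq (I + beta)), (Rabs_pos_eq I) by lra.
    apply Rmult_le_compat; auto using Rabs_pos.
    - left; apply Rinv_0_lt_compat; lra.
    - apply Rinv_le_contravar; lra. }
  rewrite E.
  assert (r ^ 2 * u ^ 2 <= u ^ 2).
  { rewrite <- (Rmult_1_l (u ^ 2)) at 2. apply Rmult_le_compat_r; [apply pow2_ge_0 | nra]. }
  assert (0 <= (r * u - v) ^ 2) by apply pow2_ge_0.
  nra.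
Qed.

Lemma pq_stancu_node_in_01 (alpha beta p q : R) (n k : nat) :
  0 <= alpha <= beta -> 0 < q < p -> (k <= n)%nat -> 0 < pq_int p q n ->
  0 <= (pq_node p q n k + alpha) / (pq_int p q n + beta) <= 1.
Proof.
  intros Hab Hqp Hk HI.
  pose proof (pq_node_le p q Hqp n k Hk).
  assert (0 <= pq_node p q n k).
  { apply Rmult_le_pos; [apply pow_le; lra | apply pq_int_ge0; auto]. }
  split.
  - apply Rmult_le_pos; [lra | left; apply Rinv_0_lt_compat; lra].
  - apply (Rmult_le_reg_r (pq_int p q n + beta)); [lra |].
    unfold Rdiv. rewrite Rmult_assoc, Rinv_l by lra. lra.
Qed.

Lemma pq_stancu_weighted_mean (alpha beta p q : R) (n : nat) (f : R -> R) (x : R) :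
  0 < q < p ->
  pq_stancu alpha beta p q n f x
  = sum_f_R0 (fun k => pq_weight p q x n k
                * f ((pq_node p q n k + alpha) / (pq_int p q n + beta))) n
    / sum_f_R0 (pq_weight p q x n) n.
Proof.
  intros Hqp. rewrite pq_weight_sum by auto. unfold pq_stancu, Rdiv. apply Rmult_comm.
Qed.

Lemma pq_stancu_error_le (alpha beta p q E K : R) (f : R -> R) (m : nat) (x : R) :
  0 <= alpha <= beta -> 0 < q < p -> p <= 1 -> 0 <= K -> 0 <= x <= 1 ->
  (forall y z, 0 <= y <= 1 -> 0 <= z <= 1 -> Rabs (f y - f z) <= E + K * (y - z) ^ 2) ->
  Rabs (pq_stancu alpha beta p q (S m) f x - f x)
  <= E + K * (2 / pq_int p q (S m) + 2 * (beta / pq_int p q (S m)) ^ 2).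
Proof.
  intros Hab Hqp Hp1 HK Hx Hf.
  pose proof (pq_int_pos p q Hqp m) as HI.
  set (I := pq_int p q (S m)) in *.
  set (W := sum_f_R0 (pq_weight p q x (S m)) (S m)).
  assert (HW : 0 < W) by (unfold W; rewrite pq_weight_sum by auto; apply pow_lt; lra).
  set (h := fun k => 2 * (pq_node p q (S m) k / I - x) ^ 2 + 2 * (beta / I) ^ 2).
  assert (Hmean : sum_f_R0 (fun k => pq_weight p q x (S m) k * h k) (S m) / W
                  = 2 * (p ^ m * x * (1 - x)) / I + 2 * (beta / I) ^ 2).
  { unfold h.
    rewrite (sum_eq _ (fun k => pq_weight p q x (S m) k * (pq_node p q (S m) k / I - x) ^ 2 * 2
                                + pq_weight p q x (S m) k * (2 * (beta / I) ^ 2)))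
      by (intros; ring).
    rewrite plus_sum, <- !scal_sum. fold W. unfold I. rewrite pq_weight_variance by auto.
    unfold W. rewrite pq_weight_sum by auto. fold I. field. split; [lra | apply pow_nonzero; lra]. }
  rewrite pq_stancu_weighted_mean by auto. fold I W.
  eapply Rle_trans.
  { apply (weighted_mean_deviation_le _ _ h); [exact HW | |].
    - intros k _. apply pq_weight_ge0; auto.
    - intros k Hk. eapply Rle_trans.
      + apply Hf; [apply pq_stancu_node_in_01; auto | exact Hx].
      + apply Rplus_le_compat_l, Rmult_le_compat_l; [exact HK |].
        apply stancu_shift_sq_le; auto. }
  fold W. rewrite Hmean.
  assert (0 <= p ^ m <= 1).
  { split; [apply pow_le; lra | rewrite <- (pow1 m); apply pow_incr; lra]. }
  assert (2 * (p ^ m * x * (1 - x)) / I <= 2 / I).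
  { apply Rmult_le_compat_r; [left; apply Rinv_0_lt_compat; lra | nra]. }
  apply Rplus_le_compat_l, Rmult_le_compat_l; lra.
Qed.

Definition clamp01 (y : R) : R := Rmax 0 (Rmin 1 y).

Lemma clamp01_in (y : R) : 0 <= clamp01 y <= 1.
Proof. unfold clamp01, Rmax, Rmin. repeat destruct Rle_dec; lra. Qed.

Lemma clamp01_id (y : R) : 0 <= y <= 1 -> clamp01 y = y.
Proof. intros. unfold clamp01, Rmax, Rmin. repeat destruct Rle_dec; lra. Qed.

Lemma clamp01_dist_le (y z : R) : Rabs (clamp01 y - clamp01 z) <= Rabs (y - z).
Proof.
  unfold clamp01, Rmax, Rmin. repeat destruct Rle_dec; unfold Rabs; repeat destruct Rcase_abs; lra.
Qed.

Lemma continuity_pt_clamp01_comp (f : R -> R) (x : R) :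
  continuous_on_01 f -> continuity_pt (fun y => f (clamp01 y)) x.
Proof.
  intros Hf eps Heps.
  destruct (Hf (clamp01 x) (clamp01_in x) eps Heps) as [delta [Hdelta Hclose]].
  exists delta. split; auto. intros y [_ Hy]. apply Hclose. split; [apply clamp01_in |].
  simpl in *. unfold R_dist in *. eapply Rle_lt_trans; [apply clamp01_dist_le | exact Hy].
Qed.

Lemma continuous_on_01_bounded (f : R -> R) :
  continuous_on_01 f -> exists M, forall y, 0 <= y <= 1 -> Rabs (f y) <= M.
Proof.
  intros Hf.
  assert (Hcont : forall y, 0 <= y <= 1 -> continuity_pt (fun y => Rabs (f (clamp01 y))) y).
  { intros y _. apply (continuity_pt_comp (fun y => f (clamp01 y)) Rabs).
    - apply continuity_pt_clamp01_comp, Hf.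
    - apply Rcontinuity_abs. }
  destruct (continuity_ab_maj _ 0 1 ltac:(lra) Hcont) as [y0 [Hmax _]].
  exists (Rabs (f (clamp01 y0))). intros y Hy. rewrite <- (clamp01_id y Hy). apply Hmax, Hy.
Qed.

Lemma continuous_on_01_unif_cont (f : R -> R) (eps : R) :
  continuous_on_01 f -> 0 < eps ->
  exists delta, 0 < delta /\ forall y z, 0 <= y <= 1 -> 0 <= z <= 1 ->
    Rabs (y - z) < delta -> Rabs (f y - f z) < eps.
Proof.
  intros Hf Heps.
  assert (Hunif : uniform_continuity (fun y => f (clamp01 y)) (fun y => 0 <= y <= 1))
    by (apply Heine; [apply compact_P3 | intros; apply continuity_pt_clamp01_comp, Hf]).
  destruct (Hunif (mkposreal eps Heps)) as [[delta Hdelta] Hclose].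
  exists delta. split; auto. intros y z Hy Hz Hyz.
  rewrite <- (clamp01_id y Hy), <- (clamp01_id z Hz). exact (Hclose y z Hy Hz Hyz).
Qed.

(* Points at distance at least [delta] satisfy [|f y - f z| <= 2 M <= K (y - z) ^ 2]. *)
Lemma continuous_on_01_quadratic_modulus (f : R -> R) (E : R) :
  continuous_on_01 f -> 0 < E ->
  exists K, 0 <= K /\ forall y z, 0 <= y <= 1 -> 0 <= z <= 1 ->
    Rabs (f y - f z) <= E + K * (y - z) ^ 2.
Proof.
  intros Hf HE.
  destruct (continuous_on_01_bounded f Hf) as [M HM].
  destruct (continuous_on_01_unif_cont f E Hf HE) as [delta [Hdelta Hclose]].
  assert (HM0 : 0 <= M) by (eapply Rle_trans; [apply Rabs_pos | apply (HM 0); lra]).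
  exists (2 * M / delta ^ 2). split.
  { apply Rmult_le_pos; [lra | left; apply Rinv_0_lt_compat, pow_lt; lra]. }
  intros y z Hy Hz.
  assert (0 <= 2 * M / delta ^ 2 * (y - z) ^ 2).
  { apply Rmult_le_pos; [apply Rmult_le_pos; [lra | left; apply Rinv_0_lt_compat, pow_lt; lra]
                        | apply pow2_ge_0]. }
  destruct (Rlt_le_dec (Rabs (y - z)) delta) as [Hnear | Hfar].
  - pose proof (Hclose y z Hy Hz Hnear). lra.
  - assert (Hsq : delta ^ 2 <= (y - z) ^ 2)
      by (rewrite <- (pow2_abs (y - z)); apply pow_incr; lra).
    assert (2 * M <= 2 * M / delta ^ 2 * (y - z) ^ 2).
    { unfold Rdiv. rewrite Rmult_assoc. rewrite <- (Rmult_1_r (2 * M)) at 1.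
      apply Rmult_le_compat_l; [lra |].
      apply (Rmult_le_reg_l (delta ^ 2)); [apply pow_lt; lra |].
      rewrite <- Rmult_assoc, Rinv_r, Rmult_1_r, Rmult_1_l by (apply pow_nonzero; lra).
      exact Hsq. }
    pose proof (HM y Hy). pose proof (HM z Hz).
    pose proof (Rabs_triang (f y) (- f z)). rewrite Rabs_Ropp in *. unfold Rminus. lra.
Qed.

Lemma inv_quadratic_le (beta I n : R) : 1 <= n -> n / 2 <= I ->
  2 / I + 2 * (beta / I) ^ 2 <= (4 + 8 * beta ^ 2) / n.
Proof.
  intros Hn HI.
  assert (Hu : 0 < / I <= 2 / n).
  { split; [apply Rinv_0_lt_compat; lra |].
    apply (Rmult_le_reg_r (I * n)); [nra |]. field_simplify; lra. }
  assert (Hv : 2 / n <= 2) by (apply (Rmult_le_reg_r n); [lra |]; field_simplify; lra).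
  replace (2 / I + 2 * (beta / I) ^ 2) with (2 * / I + 2 * beta ^ 2 * (/ I) ^ 2) by (field; lra).
  replace ((4 + 8 * beta ^ 2) / n) with (2 * (2 / n) + 2 * beta ^ 2 * (2 * (2 / n)))
    by (field; lra).
  assert (0 <= beta ^ 2) by apply pow2_ge_0.
  assert ((/ I) ^ 2 <= 2 * (2 / n)) by nra.
  nra.
Qed.

Lemma pq_stancu_error_le_inv_n (alpha beta p q E K : R) (f : R -> R) (m : nat) (x : R) :
  0 <= alpha <= beta -> 0 < q < p -> p <= 1 -> 1 / 2 < q ^ S m -> 0 <= K -> 0 <= x <= 1 ->
  (forall y z, 0 <= y <= 1 -> 0 <= z <= 1 -> Rabs (f y - f z) <= E + K * (y - z) ^ 2) ->
  Rabs (pq_stancu alpha beta p q (S m) f x - f x) <= E + K * (4 + 8 * beta ^ 2) / INR (S m).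
Proof.
  intros Hab Hqp Hp1 Hhalf HK Hx Hmod.
  assert (Hn1 : 1 <= INR (S m)) by (apply (le_INR 1); lia).
  assert (HI : INR (S m) / 2 <= pq_int p q (S m)).
  { pose proof (pq_int_ge_mul_pow p q (S m) ltac:(lra) ltac:(lra) ltac:(lra)). nra. }
  pose proof (inv_quadratic_le beta _ _ Hn1 HI) as Hdecay.
  apply (Rmult_le_compat_l K) in Hdecay; [| exact HK].
  pose proof (pq_stancu_error_le alpha beta p q E K f m x Hab Hqp Hp1 HK Hx Hmod).
  unfold Rdiv in *. lra.
Qed.

Theorem theorem3p1p1 (alpha beta : R) (p q : nat -> R) :
  0 <= alpha -> alpha <= beta ->
  (forall n, (1 <= n)%nat -> 0 < q n < 1) ->
  (forall n, (1 <= n)%nat -> q n < p n <= 1) ->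
  Un_cv p 1 -> Un_cv q 1 ->
  Un_cv (fun n => p n ^ n) 1 -> Un_cv (fun n => q n ^ n) 1 ->
  forall f : R -> R, continuous_on_01 f ->
  forall eps : R, eps > 0 ->
  exists N : nat, forall n : nat, (N <= n)%nat ->
    forall x : R, 0 <= x <= 1 ->
      Rabs (pq_stancu alpha beta (p n) (q n) n f x - f x) < eps.
Proof.
  intros Halpha Hab Hq Hp _ _ _ Hqn f Hf eps Heps.
  destruct (continuous_on_01_quadratic_modulus f (eps / 2) Hf) as [K [HK Hmod]]; [lra |].
  destruct (Hqn (1 / 2)) as [N1 HN1]; [lra |].
  set (C := K * (4 + 8 * beta ^ 2)).
  destruct (INR_unbounded (2 * C / eps)) as [N2 HN2].
  exists (Nat.max (Nat.max N1 N2) 1). intros n Hn x Hx.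
  destruct n as [|m]; [lia |].
  pose proof (Hq (S m) ltac:(lia)). pose proof (Hp (S m) ltac:(lia)).
  assert (Hhalf : 1 / 2 < q (S m) ^ S m).
  { specialize (HN1 (S m) ltac:(lia)). unfold R_dist in HN1. apply Rabs_def2 in HN1. lra. }
  assert (HC : C / INR (S m) < eps / 2).
  { assert (INR N2 <= INR (S m)) by (apply le_INR; lia).
    pose proof (lt_0_INR (S m) ltac:(lia)).
    apply (Rmult_lt_reg_r (2 * INR (S m) / eps)); [apply Rdiv_lt_0_compat; lra |].
    replace (C / INR (S m) * (2 * INR (S m) / eps)) with (2 * C / eps) by (field; lra).
    replace (eps / 2 * (2 * INR (S m) / eps)) with (INR (S m)) by (field; lra).
    lra. }
  pose proof (pq_stancu_error_le_inv_n alpha beta (p (S m)) (q (S m)) (eps / 2) K f m x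
                ltac:(lra) ltac:(lra) ltac:(lra) Hhalf HK Hx Hmod).
  unfold C in HC. lra.
Qed.
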